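(* For all $k,j,n,m\in\mathbb{N}_0$ and $x,y\in[0,1]$, $$B_{k,j;n,m}(x,y;q)=[x]_q^k[y]_q^j\sum_{l=0}^{n}\sum_{r=0}^{m}\binom{n}{l}\binom{m}{r}B_l^{(k)}\bigl([1-x]_q\bigr)\,B_r^{(j)}\bigl([1-y]_q\bigr)\,S(n-l,k)\,S(m-r,j).$$
   Context: Fix $q\in(0,1)$. For real $x$ put $[x]_q=\frac{1-q^x}{1-q}$. For $k,j,n,m\in\mathbb{Z}$ and $x,y\in[0,1]$, the modified $q$-Bernstein polynomial of two variables is $B_{k,j;n,m}(x,y;q)=\binom{n}{k}\binom{m}{j}[x]_q^k[y]_q^j[1-x]_q^{n-k}[1-y]_q^{m-j}$ if $0\le k\le n$ and $0\le j\le m$, and $B_{k,j;n,m}(x,y;q)=0$ otherwise. For $k\in\mathbb{N}_0$ the generalized Bernoulli polynomials $B_n^{(k)}(z)$ of order $k$ are defined by $\left(\frac{t}{e^t-1}\right)^k e^{zt}=\sum_{n=0}^\infty B_n^{(k)}(z)\frac{t^n}{n!}$. The Stirling numbers of the second kind $S(n,k)$ are defined by $\frac{(e^t-1)^k}{k!}=\sum_{n=0}^\infty S(n,k)\frac{t^n}{n!}$. *)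

From Stdlib Require Import Reals List Arith Factorial.
Import ListNotations.
Open Scope R_scope.

(* q-number [x]_q = (1 - q^x)/(1 - q), real exponent via Rpower (q > 0). *)
Definition qnum (q x : R) : R := (1 - Rpower q x) / (1 - q).

(* Modified q-Bernstein polynomial of two variables (k,j,n,m : nat, so the
   conditions 0 <= k, 0 <= j are automatic). *)
Definition qBern2 (q : R) (k j n m : nat) (x y : R) : R :=
  if (Nat.leb k n && Nat.leb j m)%bool then
    C n k * C m j * qnum q x ^ k * qnum q y ^ j
      * qnum q (1 - x) ^ (n - k) * qnum q (1 - y) ^ (m - j)
  else 0.

(* Formal power series over R: coefficient sequences. *)
Definition ps := nat -> R.
Definition ps_one : ps := fun n => if Nat.eqb n 0 then 1 else 0.
Definition ps_mul (f g : ps) : ps :=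
  fun n => sum_f_R0 (fun i => f i * g (n - i)%nat) n.
Fixpoint ps_pow (f : ps) (k : nat) : ps :=
  match k with O => ps_one | S k' => ps_mul f (ps_pow f k') end.
(* Multiplicative inverse of a series f with f 0 <> 0:
   g 0 = 1/f 0, g n = -(1/f 0) * sum_{i=1}^n f i * g (n-i). *)
Fixpoint ps_inv_list (f : ps) (n : nat) : list R :=
  match n with
  | O => [/ f O]
  | S n' => let l := ps_inv_list f n' in
            l ++ [ - / f O * sum_f_R0 (fun i => f (S i) * nth (n' - i)%nat l 0) n' ]
  end.
Definition ps_inv (f : ps) : ps := fun n => nth n (ps_inv_list f n) 0.

(* Series of e^{zt}, of e^t - 1, and of (e^t - 1)/t. *)
Definition ps_exp (z : R) : ps := fun n => z ^ n / INR (fact n).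
Definition ps_expm1 : ps := fun n => if Nat.eqb n 0 then 0 else / INR (fact n).
Definition ps_expm1_div_t : ps := fun n => / INR (fact (S n)).

(* Generalized Bernoulli polynomials:
   (t/(e^t-1))^k e^{zt} = sum_n B_n^{(k)}(z) t^n/n!  (as formal series). *)
Definition genBernoulli (k n : nat) (z : R) : R :=
  INR (fact n) * ps_mul (ps_pow (ps_inv ps_expm1_div_t) k) (ps_exp z) n.

(* Stirling numbers of the second kind: (e^t-1)^k/k! = sum_n S(n,k) t^n/n!. *)
Definition stirling2 (n k : nat) : R :=
  INR (fact n) * (ps_pow ps_expm1 k n / INR (fact k)).

(* sum_{l<=n} C(n,l) B_l^(k)(z) S(n-l,k) = C(n,k) z^(n-k)  if k <= n, else 0,

   taken at (k,n,u) and (j,m,v), and this is exactly the expansion of qBern2.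
   The one-variable identity compares coefficients of t^n in
     (t/(e^t-1))^k e^{zt} * (e^t-1)^k = t^k e^{zt}.  Series are then compared with polynomials below
   a fixed order N, where truncation respects products; writing I, D, E for
   the truncations of t/(e^t-1), (e^t-1)/t and e^{zt}, the left side becomes
   'X^k * E * (I*D)^k, and I*D = 1 modulo 'X^N finishes the computation. *)
From Stdlib Require Import Reals List Arith Lia.
Open Scope R_scope.

Lemma ps_inv_list_length (f : ps) (n : nat) : length (ps_inv_list f n) = S n.
Proof.
  induction n as [|n IH]; simpl; [reflexivity|].
  rewrite length_app, IH; simpl; lia.
Qed.

Lemma ps_inv_list_nth (f : ps) (n i : nat) :
  (i <= n)%nat -> nth i (ps_inv_list f n) 0 = ps_inv f i.
Proof.
  induction n as [|n IH]; intros Hi.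
  - assert (i = 0%nat) by lia; subst; reflexivity.
  - destruct (Nat.eq_dec i (S n)) as [->|Hne]; [reflexivity|].
    simpl. rewrite app_nth1 by (rewrite ps_inv_list_length; lia).
    apply IH; lia.
Qed.

Lemma ps_inv_succ (f : ps) (n : nat) : ps_inv f (S n) =
  - / f O * sum_f_R0 (fun i => f (S i) * ps_inv f (n - i)%nat) n.
Proof.
  unfold ps_inv at 1; simpl.
  rewrite app_nth2 by (rewrite ps_inv_list_length; lia).
  rewrite ps_inv_list_length, Nat.sub_diag; simpl. f_equal.
  apply sum_eq; intros i Hi. rewrite ps_inv_list_nth by lia. reflexivity.
Qed.

Lemma ps_mul_inv (f : ps) (n : nat) : f O <> 0 -> ps_mul f (ps_inv f) n = ps_one n.
Proof.
  intros Hf0. unfold ps_mul, ps_one. destruct n as [|n].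
  - simpl. unfold ps_inv; simpl. field; exact Hf0.
  - rewrite decomp_sum by lia; simpl. rewrite ps_inv_succ. field; exact Hf0.
Qed.

From mathcomp Require Import all_boot all_algebra.
From mathcomp Require Import Rstruct.
From mathcomp Require Import ring zify.
Import GRing.Theory.
Local Open Scope ring_scope.

Definition trunc (N : nat) (f : ps) : {poly R} := \poly_(i < N) f i.

Definition agree (N : nat) (f : ps) (p : {poly R}) : Prop :=
  forall i, (i < N)%N -> f i = p`_i.

Definition eq_below (N : nat) (p p' : {poly R}) : Prop :=
  forall i, (i < N)%N -> p`_i = p'`_i.

Lemma ps_mulE (f g : ps) (n : nat) :
  ps_mul f g n = \sum_(i < n.+1) f i * g (n - i)%N.
Proof. by rewrite /ps_mul sum_f_R0E big_mkord. Qed.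

Lemma agree_trunc (N : nat) (f : ps) : agree N f (trunc N f).
Proof. by move=> i Hi; rewrite coef_poly Hi. Qed.

Lemma agree_one (N : nat) : agree N ps_one 1.
Proof. by move=> [|i] _; rewrite coef1. Qed.

(* Agreement below N is compatible with products (Cauchy products only use
   coefficients of smaller index). *)
Lemma agree_mul {N : nat} {f g : ps} {p p' : {poly R}} :
  agree N f p -> agree N g p' -> agree N (ps_mul f g) (p * p').
Proof.
move=> Hf Hg i Hi; rewrite ps_mulE coefM; apply: eq_bigr => l _.
have Hl := ltn_ord l.
by rewrite Hf ?Hg //; lia.
Qed.

Lemma agree_pow {N : nat} {f : ps} {p : {poly R}} (k : nat) :
  agree N f p -> agree N (ps_pow f k) (p ^+ k).
Proof.
move=> Hfp; elim: k => [|k IH] /=; first exact: agree_one.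
by rewrite exprS; apply: agree_mul.
Qed.

Lemma eq_below_mull {N : nat} (r : {poly R}) {p p' : {poly R}} :
  eq_below N p p' -> eq_below N (r * p) (r * p').
Proof.
move=> Hpp' i Hi; rewrite !coefM; apply: eq_bigr => l _.
by rewrite Hpp' //; lia.
Qed.

Lemma eq_below_pow1 {N : nat} {p : {poly R}} (k : nat) :
  eq_below N p 1 -> eq_below N (p ^+ k) 1.
Proof.
move=> Hp; elim: k => [|k IH] i Hi; first by rewrite expr0.
by rewrite exprS (eq_below_mull p IH i Hi) mulr1 Hp.
Qed.

Lemma fact_neq0 (n : nat) : INR (fact n) != 0.
Proof. by apply/eqP; apply: INR_fact_neq_0. Qed.

Lemma agree_expm1 (N : nat) :
  agree N ps_expm1 ('X * trunc N ps_expm1_div_t).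
Proof.
move=> [|i] Hi; rewrite coefXM //= coef_poly.
by rewrite (ltn_trans (ltnSn i) Hi).
Qed.

Lemma inv_expm1_div_t (N : nat) :
  eq_below N (trunc N (ps_inv ps_expm1_div_t) * trunc N ps_expm1_div_t) 1.
Proof.
move=> i Hi.
rewrite mulrC -(agree_mul (agree_trunc N _) (agree_trunc N _) i Hi).
rewrite -(agree_one N i Hi) ps_mul_inv //.
by rewrite /ps_expm1_div_t /= RinvE; apply/eqP; rewrite invr_eq0 (fact_neq0 1).
Qed.

(* The one-variable identity
   sum_l C(n,l) B_l^(k)(z) S(n-l,k) = [k <= n] C(n,k) z^(n-k);
   the sum is n!/k! times the n-th coefficient of I^k E (X D)^k. *)
Lemma bernoulli_stirling_convolution (k n : nat) (z : R) :
  \sum_(l < n.+1) (C n l * genBernoulli k l z * stirling2 (n - l) k)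
  = if (k <= n)%N then C n k * z ^+ (n - k) else 0.
Proof.
set N := n.+1; set D := trunc N ps_expm1_div_t.
set I := trunc N (ps_inv ps_expm1_div_t); set E := trunc N (ps_exp z).
set A := I ^+ k * E; set B := ('X * D) ^+ k.
have agreeA : agree N (ps_mul (ps_pow (ps_inv ps_expm1_div_t) k) (ps_exp z)) A.
  by apply: agree_mul; [apply: agree_pow|]; apply: agree_trunc.
have agreeB : agree N (ps_pow ps_expm1 k) B by apply/agree_pow/agree_expm1.
have -> : \sum_(l < n.+1) (C n l * genBernoulli k l z * stirling2 (n - l) k)
          = INR (fact n) / INR (fact k) * (A * B)`_n.
  rewrite coefM mulr_sumr; apply: eq_bigr => l _.
  have Hl := ltn_ord l.
  rewrite /genBernoulli /stirling2 agreeA // agreeB; last by rewrite /N; lia.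
  rewrite /C ?RmultE ?RdivE ?RinvE.
  by field; rewrite !fact_neq0.
have -> : A * B = 'X^k * (E * (I * D) ^+ k) by rewrite /A /B !exprMn; ring.
rewrite coefXnM ltnNge; case: (leqP k n) => Hkn /=; last by rewrite mulr0.
rewrite (eq_below_mull E (eq_below_pow1 k (inv_expm1_div_t N))); last first.
  by rewrite /N; lia.
rewrite mulr1 /E coef_poly.
have -> : (n - k < N)%N by rewrite /N; lia.
rewrite /ps_exp /C RpowE !RdivE !RmultE.
by field; rewrite !fact_neq0.
Qed.

Lemma bernoulli_stirling_sum (k n : nat) (z : R) :
  sum_f_R0 (fun l => C n l * genBernoulli k l z * stirling2 (n - l) k) n
  = if (k <= n)%N then C n k * z ^+ (n - k) else 0.
Proof. by rewrite sum_f_R0E big_mkord bernoulli_stirling_convolution. Qed.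

Lemma sum_f_R0_mul (f g : nat -> R) (n m : nat) :
  sum_f_R0 (fun l => sum_f_R0 (fun r => f l * g r) m) n
  = sum_f_R0 f n * sum_f_R0 g m.
Proof.
rewrite !sum_f_R0E big_distrl /=; apply: eq_bigr => l _.
by rewrite sum_f_R0E big_distrr.
Qed.

Lemma lebE (a b : nat) : Nat.leb a b = (a <= b)%N.
Proof. by case: (leqP a b) => h; [apply/Nat.leb_le | apply/Nat.leb_gt]; lia. Qed.

Local Close Scope ring_scope.

Theorem theorem10 (q : R) (hq0 : 0 < q) (hq1 : q < 1)
  (k j n m : nat) (x y : R)
  (hx0 : 0 <= x) (hx1 : x <= 1) (hy0 : 0 <= y) (hy1 : y <= 1) :
  qBern2 q k j n m x y =
  qnum q x ^ k * qnum q y ^ j *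
  sum_f_R0 (fun l =>
    sum_f_R0 (fun r =>
      C n l * C m r
      * genBernoulli k l (qnum q (1 - x))
      * genBernoulli j r (qnum q (1 - y))
      * stirling2 (n - l) k * stirling2 (m - r) j) m) n.
Proof.
Local Open Scope ring_scope.
set F := fun l => C n l * genBernoulli k l (qnum q (1 - x)) * stirling2 (n - l) k.
set G := fun r => C m r * genBernoulli j r (qnum q (1 - y)) * stirling2 (m - r) j.
rewrite (_ : sum_f_R0 _ n = sum_f_R0 (fun l => sum_f_R0 (fun r => F l * G r) m) n);
  last by apply: PartSum.sum_eq => l _; apply: PartSum.sum_eq => r _; rewrite /F /G !RmultE; ring.
rewrite sum_f_R0_mul !bernoulli_stirling_sum /qBern2 !lebE.
by case: (k <= n)%N; case: (j <= m)%N; rewrite /= ?RmultE ?RpowE ?minusE ?mul0r ?mulr0 //; ring.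
Qed.
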